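(* Let $n\ge2$, $m,m'\in\mathbb{Z}$ with $m'\neq0$, $\gcd(n,m)=1$ and $\gcd(n,m+m')=1$. Then $$\Delta_{T(n,m+m')}(q)=\frac{1}{[n]_q\,(1-q^{m'})}\,\zeta(q^{m'},\sigma_{n,m};\beta_{n,q})^{-1},$$ where $\zeta(q^{m'},\sigma_{n,m};\beta_{n,q})$ denotes the value of the rational function $\zeta(s,\sigma_{n,m};\beta_{n,q})$ at $s=q^{m'}$, and $\Delta_{T(n,m+m')}(q)=\frac{(1-q)(1-q^{n(m+m')})}{(1-q^n)(1-q^{m+m'})}$ is the representative of the Alexander polynomial of the torus knot $T(n,m+m')$ normalized so that $\operatorname{Res}_{s=1}\zeta(s,\sigma_{n,m+m'};\beta_{n,q})=-[n]_q^{-1}\Delta_{T(n,m+m')}(q)^{-1}$.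
   Context: $\sigma_{n,m}:=(\sigma_1\cdots\sigma_{n-1})^m\in\mathrm{B}_n$, whose closure is the torus knot $T(n,m)$. The Burau representation $\beta_{n,q}$ is given by $\beta_{n,q}(\sigma_i)=I_{i-1}\oplus\begin{pmatrix}1-q&1\\ q&0\end{pmatrix}\oplus I_{n-i-1}$ over $\mathbb{Z}[q^{\pm1}]$, and $\zeta(s,\sigma;\beta_{n,q}):=\det(I_n-\beta_{n,q}(\sigma)s)^{-1}$. $[n]_q=(1-q^n)/(1-q)$. *)

From HB Require Import structures.
From mathcomp Require Import all_boot all_order all_algebra fraction.
Set Implicit Arguments. Unset Strict Implicit. Unset Printing Implicit Defensive.
Import Order.TTheory GRing.Theory Num.Theory.
Local Open Scope ring_scope.

Definition K : fieldType := {fraction {poly int}}.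
Definition q : K := @FracField.tofrac {poly int} 'X.

(* Burau matrix of sigma_i (1 <= i <= n-1), indices 0-based *)
Definition burau (n i : nat) : 'M[K]_n :=
  \matrix_(r < n, c < n)
    if (r == i.-1 :> nat) && (c == i.-1 :> nat) then 1 - q
    else if (r == i.-1 :> nat) && (c == i :> nat) then 1
    else if (r == i :> nat) && (c == i.-1 :> nat) then q
    else if (r == i :> nat) && (c == i :> nat) then 0
    else ((r == c :> nat)%:R : K).

Definition burau_cox (n : nat) : 'M[K]_n :=
  foldr (fun i A => burau n i *m A) 1%:M (iota 1 n.-1).

Definition mxpown (n : nat) (A : 'M[K]_n) (k : nat) : 'M[K]_n :=
  iter k (mulmx A) 1%:M.

Definition mxpowz (n : nat) (A : 'M[K]_n) (m : int) : 'M[K]_n :=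
  match m with
  | Posz k => mxpown A k
  | Negz k => mxpown (invmx A) k.+1
  end.

(* beta_{n,q}(sigma_{n,m}) = beta(sigma_1 ... sigma_{n-1})^m *)
Definition burau_sigma (n : nat) (m : int) : 'M[K]_n := mxpowz (burau_cox n) m.

Definition zeta (n : nat) (m : int) (s : K) : K :=
  (\det (1%:M - s *: burau_sigma n m))^-1.

Definition qint (n : nat) : K := (1 - q ^+ n) / (1 - q).

Definition alex_torus (n : nat) (k : int) : K :=
  ((1 - q) * (1 - q ^ (n%:Z * k))) / ((1 - q ^+ n) * (1 - q ^ k)).

From HB Require Import structures.
From mathcomp Require Import all_boot all_order all_algebra all_fingroup fraction.
From mathcomp Require Import zify ring.
Set Implicit Arguments. Unset Strict Implicit. Unset Printing Implicit Defensive.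
Import GRing.Theory.
Local Open Scope ring_scope.

(* The Burau image of the Coxeter braid sigma_1 ... sigma_(n-1) is [B = q Q + w 1],
   where [Q] is the cyclic shift matrix and [1] the all-ones row, a left eigenvector of
   [B] for the eigenvalue 1. Matrices [c Q^k + w 1] are closed under products and
   [B^-1 = q^-1 Q^(n-1) + w' 1], so [B^m = q^m Q^k + w'' 1] with [k] coprime to [n] when
   [m] is. Replacing the first row by [1] shows that a rank-one update [w 1] changes
   [det (1 - s A)] only through the eigenvalue of [A] on [1]:
   [det (1 - s B^m) (1 - s q^m) = det (1 - s q^m Q^k) (1 - s)]. Finally [Q^k] is conjugate
   to [Q] by the permutation [i |-> k i mod n], and [det (1 - y Q) = 1 - y^n]; evaluating
   at [s = q^m'] gives the Alexander polynomial of [T(n, m + m')]. *)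

Section RotationMatrices.
Variables (R : comNzRingType) (p : nat).
Local Notation n := p.+1.

Lemma sum_mul_eqn (F : nat -> R) (a : nat) : (a < n)%N ->
  \sum_(j < n) F j * ((j : nat) == a)%:R = F a.
Proof.
move=> lt_a_n; rewrite (bigD1 (Ordinal lt_a_n)) //= eqxx mulr1 big1 ?addr0 //.
move=> j neq_j; suff /negbTE -> : (j : nat) != a by rewrite mulr0.
by apply: contra neq_j => /eqP eq_j; apply/eqP/val_inj.
Qed.

Definition ones : 'rV[R]_n := const_mx 1.

Definition rotmx (k : nat) : 'M[R]_n :=
  \matrix_(r, c) ((r : nat) == ((c + k) %% n)%N)%:R.

Lemma rotmxD k l : rotmx k *m rotmx l = rotmx (k + l).
Proof.
apply/matrixP => r c; rewrite !mxE.
under eq_bigr do rewrite !mxE.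
rewrite (sum_mul_eqn (fun j => ((r : nat) == ((j + k) %% n)%N)%:R)) ?ltn_mod //.
by rewrite modnDml addnAC addnA.
Qed.

Lemma rotmx0 : rotmx 0 = 1%:M.
Proof. by apply/matrixP => r c; rewrite !mxE addn0 modn_small. Qed.

Lemma rotmxn : rotmx n = 1%:M.
Proof. by apply/matrixP => r c; rewrite !mxE modnDr modn_small. Qed.

Lemma ones_rotmx k : ones *m rotmx k = ones.
Proof.
apply/matrixP => i c; rewrite !mxE.
rewrite (eq_bigr (fun j : 'I_n => 1 * ((j : nat) == ((c + k) %% n)%N)%:R)).
  by rewrite (sum_mul_eqn (fun=> 1)) ?ltn_mod.
by move=> j _; rewrite !mxE !mul1r.
Qed.

Definition ones_row0 (M : 'M[R]_n) : 'M[R]_n :=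
  \matrix_(i, j) if i == ord0 then 1 else M i j.

Lemma det_ones_row0 (M : 'M[R]_n) a : ones *m M = a *: ones ->
  \det M = a * \det (ones_row0 M).
Proof.
move=> onesM; set L := ones_row0 1%:M.
have detL : \det L = 1.
  rewrite -det_tr det_trig; first by apply: big1 => i _; rewrite !mxE eqxx; case: ifP.
  apply/is_trig_mxP => i j lt_ij; rewrite !mxE.
  have /negbTE -> : j != ord0 by rewrite -val_eqE /= -lt0n (leq_ltn_trans _ lt_ij).
  by have /negbTE -> : j != i by rewrite neq_ltn lt_ij orbT.
have rowL i : i != ord0 -> row i L = row i 1%:M.
  by move=> /negbTE i_neq0; apply/rowP => j; rewrite !mxE i_neq0.
have rowL0 : row ord0 L = ones by apply/rowP => j; rewrite !mxE.
have row'LM : row' ord0 (ones_row0 M) = row' ord0 (L *m M).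
  apply/matrixP => i j; have /negbTE i_neq0 : lift ord0 i != ord0 by rewrite eq_sym neq_lift.
  have := congr1 (fun v : 'rV_n => v 0 j) (row_mul (lift ord0 i) L M).
  rewrite rowL ?i_neq0 // -row_mul mul1mx /=.
  by rewrite !mxE i_neq0 => ->.
rewrite -[\det M]mul1r -detL -det_mulmx.
rewrite (determinant_multilinear (A := L *m M) (B := ones_row0 M) (C := ones_row0 M)
    (i0 := ord0) (b := a) (c := 0)) ?mul0r ?addr0 //.
rewrite row_mul rowL0 onesM scale0r addr0; congr (_ *: _).
by apply/rowP => j; rewrite !mxE eqxx.
Qed.

Lemma det_ones_row0_addr (M : 'M[R]_n) (w : 'cV[R]_n) :
  \det (ones_row0 (M + w *m ones)) = \det (ones_row0 M).
Proof.
(* Row [i > 0] of the left side is row [i] of [ones_row0 M] plus [w i] times its row [0]. *)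
pose E : 'M[R]_n := \matrix_(i, j) if (j == ord0) && (i != ord0) then w i 0 else 0.
have detE : \det (1%:M + E) = 1.
  rewrite det_trig; first by apply: big1 => i _; rewrite !mxE eqxx andbN addr0.
  apply/is_trig_mxP => i j lt_ij; rewrite !mxE.
  have /negbTE -> : j != ord0 by rewrite -val_eqE /= -lt0n (leq_ltn_trans _ lt_ij).
  have /negbTE -> : i != j by rewrite neq_ltn lt_ij.
  by rewrite /= addr0.
suff -> : ones_row0 (M + w *m ones) = (1%:M + E) *m ones_row0 M.
  by rewrite det_mulmx detE mul1r.
apply/matrixP => i j; rewrite mulmxDl mul1mx !mxE big_ord1 (bigD1 ord0) //= big1.
  by rewrite !mxE !eqxx; case: (i == ord0); rewrite /= ?mul0r ?mulr1 ?addr0.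
by move=> k /negbTE k_neq0; rewrite !mxE k_neq0 mul0r.
Qed.

Lemma det_ones_update (A C : 'M[R]_n) (w : 'cV[R]_n) a c :
  ones *m A = a *: ones -> ones *m C = c *: ones -> A = C + w *m ones ->
  \det A * c = \det C * a.
Proof.
move=> onesA onesC defA; rewrite (det_ones_row0 onesA) (det_ones_row0 onesC).
rewrite defA det_ones_row0_addr; ring.
Qed.

Lemma ones_1_sub_scale (A : 'M[R]_n) a s : ones *m A = a *: ones ->
  ones *m (1%:M - s *: A) = (1 - s * a) *: ones.
Proof. by move=> onesA; rewrite mulmxBr mulmx1 -scalemxAr onesA scalerA scalerBl scale1r. Qed.

Lemma ones_iter_mulmx (A : 'M[R]_n) j :
  ones *m A = ones -> ones *m iter j (mulmx A) 1%:M = ones.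
Proof. by move=> onesA; elim: j => [|j IHj] /=; rewrite ?mulmx1 // mulmxA onesA IHj. Qed.

Definition rotmx_mod_ones (c : R) (k : nat) (A : 'M[R]_n) :=
  exists w : 'cV[R]_n, A = c *: rotmx k + w *m ones.

Lemma rotmx_mod_onesM c1 k1 A1 c2 k2 A2 :
  rotmx_mod_ones c1 k1 A1 -> rotmx_mod_ones c2 k2 A2 ->
  rotmx_mod_ones (c1 * c2) (k1 + k2) (A1 *m A2).
Proof.
move=> [w1 ->] [w2 ->].
exists (c1 *: (rotmx k1 *m w2) + c2 *: w1 + w1 *m (ones *m w2)).
rewrite mulmxDl !mulmxDr -!scalemxAl -!scalemxAr scalerA rotmxD.
by rewrite -!mulmxA ones_rotmx !mulmxDl -!scalemxAl !mulmxA !addrA.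
Qed.

Lemma rotmx_mod_ones_iter c k A j : rotmx_mod_ones c k A ->
  rotmx_mod_ones (c ^+ j) (j * k) (iter j (mulmx A) 1%:M).
Proof.
move=> modA; elim: j => [|j IHj] /=.
  by exists 0; rewrite expr0 scale1r mul0n rotmx0 mul0mx addr0.
by rewrite exprS mulSn; apply: rotmx_mod_onesM.
Qed.

Lemma eqn_modMr_coprime (a b k : nat) : (a < n)%N -> (b < n)%N -> coprime k n ->
  ((a * k) %% n == (b * k) %% n)%N = (a == b).
Proof.
move=> lt_a lt_b coprime_k; apply/idP/idP => [|/eqP -> //].
wlog le_ab : a b lt_a lt_b / (a <= b)%N.
  move=> IH; case: (leqP a b) => [|/ltnW]; first exact: IH.
  by rewrite eq_sym [_ == b]eq_sym; apply: IH.
rewrite eq_sym eqn_mod_dvd ?leq_mul2r ?le_ab ?orbT // -mulnBl.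
rewrite Gauss_dvdl 1?coprime_sym // => dvd_n.
have : ~~ (0 < b - a)%N by apply/negP => /dvdn_leq /(_ dvd_n); lia.
lia.
Qed.

(* Conjugating by the permutation [i |-> i * k mod n] turns [rotmx k] into [rotmx 1]. *)
Lemma det_1_sub_rotmx_coprime k y : coprime k n ->
  \det (1%:M - y *: rotmx k) = \det (1%:M - y *: rotmx 1).
Proof.
move=> coprime_k.
pose f (i : 'I_n) := Ordinal (ltn_pmod (i * k) (ltn0Sn p)).
have f_inj : injective f.
  by move=> i j /(congr1 val) /eqP; rewrite /= eqn_modMr_coprime // => /eqP/val_inj.
have -> : 1%:M - y *: rotmx 1 = row_perm (perm f_inj) (col_perm (perm f_inj) (1%:M - y *: rotmx k)).
  apply/matrixP => i j; rewrite !mxE !permE /= (inj_eq f_inj); congr (_ - y * _%:R).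
  by rewrite modnDml -mulSnr -[(j.+1 * k %% n)%N]modnMml eqn_modMr_coprime ?ltn_mod // addn1.
rewrite row_permE col_permE !det_mulmx !det_perm odd_permV.
by rewrite mulrCA -signr_addb addbb expr0 mulr1.
Qed.

End RotationMatrices.

Lemma modn_le x d : (x <= d)%N -> (x %% d = if x == d then 0 else x)%N.
Proof. by move=> le_xd; case: eqP => [->|ne]; rewrite ?modnn // modn_small; lia. Qed.

Ltac mod_lia := rewrite /bump => *;
  repeat (rewrite modn_le; last by lia); repeat case: ifPn => ?;
  first [apply/negbTE/eqP | apply/eqP]; lia.

Lemma det_1_sub_rotmx1 (R : comNzRingType) p (y : R) :
  \det (1%:M - y *: rotmx R p 1) = 1 - y ^+ p.+1.
Proof.
case: p => [|r]; first by rewrite det_mx11 !mxE /= mulr1.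
(* Along row 0 only columns 0 and n-1 contribute, and both minors are triangular. *)
set M := 1%:M - _.
rewrite (expand_det_row _ ord0) big_ord_recl big_ord_recr /= big1; last first.
  move=> i _; rewrite !mxE /=.
  have -> : (0%N == ((bump 0 i + 1) %% r.+2)%N) = false by move: (ltn_ord i); mod_lia.
  by rewrite mulr0 subr0 mul0r.
have cof00 : cofactor M ord0 ord0 = 1.
  rewrite /cofactor /= expr0 mul1r det_trig.
    apply: big1 => i _; rewrite !mxE /= eqxx.
    have -> : (bump 0 i == ((bump 0 i + 1) %% r.+2)%N) = false by move: (ltn_ord i); mod_lia.
    by rewrite mulr0 subr0.
  apply/is_trig_mxP => i j lt_ij; rewrite !mxE /=.
  have -> : (lift ord0 i == lift ord0 j) = false.
    by rewrite -val_eqE /=; move: (ltn_ord i) (ltn_ord j) lt_ij; mod_lia.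
  have -> : (bump 0 i == ((bump 0 j + 1) %% r.+2)%N) = false.
    by move: (ltn_ord i) (ltn_ord j) lt_ij; mod_lia.
  by rewrite mulr0 subr0.
have cof0n : cofactor M ord0 (lift ord0 ord_max) = (-1) ^+ r.+1 * (- y) ^+ r.+1.
  rewrite /cofactor /= -det_tr det_trig.
    congr (_ * _); rewrite -[in RHS](card_ord r.+1) -prodr_const; apply: eq_bigr => i _.
    rewrite !mxE /=.
    have -> : (lift ord0 i == lift (lift ord0 ord_max) i) = false.
      by rewrite -val_eqE /=; move: (ltn_ord i); mod_lia.
    have -> : (bump 0 i == ((bump (bump 0 r) i + 1) %% r.+2)%N) = true.
      by move: (ltn_ord i); mod_lia.
    by rewrite /= sub0r mulr1.
  apply/is_trig_mxP => i j lt_ij; rewrite !mxE /=.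
  have -> : (lift ord0 j == lift (lift ord0 ord_max) i) = false.
    by rewrite -val_eqE /=; move: (ltn_ord i) (ltn_ord j) lt_ij; mod_lia.
  have -> : (bump 0 j == ((bump (bump 0 r) i + 1) %% r.+2)%N) = false.
    by move: (ltn_ord i) (ltn_ord j) lt_ij; mod_lia.
  by rewrite mulr0 subr0.
rewrite cof00 cof0n !mxE /=.
have -> : (0%N == ((bump 0 r + 1) %% r.+2)%N) = true by mod_lia.
have sign2 : (-1) ^+ r.+1 * (-1) ^+ r.+1 = 1 :> R by rewrite -exprMn mulrNN mulr1 expr1n.
by rewrite [(- y) ^+ _]exprNn mulrA sign2 mul1r [in RHS]exprS /= !(mulr0, mulr1, subr0, sub0r, add0r) mulNr.
Qed.

Ltac case_lia := repeat (let H := fresh in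
  case: ifP => H; rewrite ?H; [move: H => /idP H | move: H => /negbT H];
  try (exfalso; lia)); try ring.

Section BurauCoxeter.
Variable p : nat.
Local Notation n := p.+1.

Definition burau_row_top k (c : nat) : K :=
  if c == k then 1 - q else if c == k.+1 then 1 else 0.
Definition burau_row_bot k (c : nat) : K := if c == k then q else 0.
Definition burau_diag_out k (c : nat) : K := if (c == k) || (c == k.+1) then 0 else 1.

Lemma burauE k (j c : 'I_n) :
  burau n k.+1 j c = ((j : nat) == k)%:R * burau_row_top k c
    + ((j : nat) == k.+1)%:R * burau_row_bot k c + ((j : nat) == c)%:R * burau_diag_out k c.
Proof.
rewrite /burau mxE /burau_row_top /burau_row_bot /burau_diag_out /= !mulrb.
by move: (j : nat) (c : nat) (ltn_ord j) (ltn_ord c) => a b lt_a lt_b; case_lia.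
Qed.

Definition burau_prefix_entry (k r c : nat) : K :=
  if r == 0%N then (if (c < k)%N then 1 - q else if c == k then 1 else 0)
  else if (r <= k)%N then (if c == r.-1 then q else 0) else (r == c)%:R.

Lemma burau_prefix_entry_diag k a : burau_prefix_entry k a k = (a == 0%N)%:R.
Proof. by rewrite /burau_prefix_entry !mulrb; case_lia. Qed.

Lemma burau_prefix_entry_next k a : burau_prefix_entry k a k.+1 = (a == k.+1)%:R.
Proof. by rewrite /burau_prefix_entry !mulrb; case_lia. Qed.

Lemma burau_prefixE k : (k < n)%N ->
  foldr (fun i A => burau n i *m A) 1%:M (iota 1 k) =
  \matrix_(r, c) burau_prefix_entry k r c.
Proof.
elim: k => [|k IHk] lt_kn.
  apply/matrixP => r c; rewrite !mxE /burau_prefix_entry /= !mulrb.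
  by rewrite -val_eqE /=; move: (r : nat) (c : nat) => a b; case_lia.
have foldr_mulmx s X : foldr (fun i A => burau n i *m A) X s =
    foldr (fun i A => burau n i *m A) 1%:M s *m X.
  by elim: s => [|a s IHs] /=; rewrite ?mul1mx // IHs mulmxA.
rewrite -[k.+1]addn1 iotaD foldr_cat /= foldr_mulmx IHk; last lia.
rewrite mulmx1 add1n addn1; apply/matrixP => r c; rewrite !mxE.
under eq_bigr do rewrite burauE !mxE !mulrDr !mulrA.
rewrite !big_split /= -!big_distrl /= !sum_mul_eqn ?ltn_ord //; last lia.
rewrite burau_prefix_entry_diag burau_prefix_entry_next.
rewrite /burau_row_top /burau_row_bot /burau_diag_out.
move: (r : nat) (c : nat) (ltn_ord r) (ltn_ord c) => a b lt_a lt_b.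
by have [->|?] := eqVneq b k; last have [->|?] := eqVneq b k.+1;
  rewrite /burau_prefix_entry !mulrb; case_lia.
Qed.

Definition cox_defect : 'cV[K]_n := \col_i (if i == ord0 then 1 - q else 0).

Lemma burau_coxE : burau_cox n = q *: rotmx K p 1 + cox_defect *m ones K p.
Proof.
rewrite /burau_cox /= (burau_prefixE (k:=p)) //.
apply/matrixP => a b; rewrite !mxE big_ord1 !mxE.
rewrite /burau_prefix_entry !mulrb -val_eqE /=.
move: (a : nat) (b : nat) (ltn_ord a) (ltn_ord b) => x y lt_x lt_y.
rewrite modn_le; last lia.
by case: ((y + 1)%N =P n) => ?; case_lia.
Qed.

End BurauCoxeter.

Lemma q_neq0 : q != 0.
Proof. by rewrite /q tofrac_eq0 polyX_eq0. Qed.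

Lemma one_sub_qz_neq0 (z : int) : z != 0 -> 1 - q ^ z != 0.
Proof.
have qXn_neq1 j : (0 < j)%N -> q ^+ j != 1.
  move=> j_gt0; rewrite /q -tofracXn -tofrac1 tofrac_eq.
  by apply/eqP => /(congr1 (fun r : {poly int} => size r)); rewrite size_polyXn size_poly1; lia.
move=> z_neq0; rewrite subr_eq0 eq_sym; case: z z_neq0 => j z_neq0.
  by apply: qXn_neq1; move: z_neq0; rewrite -lt0n.
by rewrite /= invr_eq1; apply: qXn_neq1.
Qed.

Section BurauSigma.
Variable p : nat.
Local Notation n := p.+1.
Local Notation B := (burau_cox n).

Lemma ones_burau_cox : ones K p *m B = ones K p.
Proof.
have ones_defect : ones K p *m cox_defect p = (1 - q)%:M.
  apply/matrixP => i j; rewrite !ord1 !mxE (bigD1 ord0) //= !mxE eqxx mul1r big1 ?addr0 //.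
  by move=> k /negbTE k_neq0; rewrite !mxE k_neq0 mulr0.
rewrite burau_coxE mulmxDr -scalemxAr ones_rotmx mulmxA ones_defect mul_scalar_mx.
by rewrite -scalerDl addrC subrK scale1r.
Qed.

Lemma unitmx_burau_cox : B \in unitmx.
Proof.
have det_rot_unit : \det (rotmx K p 1) * \det (rotmx K p p) = 1.
  by rewrite -det_mulmx rotmxD add1n rotmxn det1.
have ones_B : ones K p *m B = 1 *: ones K p by rewrite scale1r ones_burau_cox.
have ones_qrot : ones K p *m (q *: rotmx K p 1) = q *: ones K p by rewrite -scalemxAr ones_rotmx.
have := det_ones_update ones_B ones_qrot (burau_coxE p); rewrite detZ mulr1 => eq_det.
rewrite unitmxE unitfE; apply/eqP => det_B0; move: eq_det.
rewrite det_B0 mul0r => /esym/eqP; rewrite mulf_eq0 expf_eq0 (negbTE q_neq0) andbF /=.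
by move=> /eqP det_rot0; move: det_rot_unit; rewrite det_rot0 mul0r => /eqP; rewrite eq_sym oner_eq0.
Qed.

Lemma invmx_burau_cox_mod_ones : rotmx_mod_ones q^-1 p (invmx B).
Proof.
have BY : B *m (q^-1 *: rotmx K p p) = 1%:M + q^-1 *: (cox_defect p *m ones K p).
  rewrite burau_coxE mulmxDl -!scalemxAr -scalemxAl scalerA mulVf ?q_neq0 //.
  by rewrite scale1r rotmxD add1n rotmxn -mulmxA ones_rotmx scalemxAl.
exists (- (q^-1 *: (invmx B *m cox_defect p))).
rewrite -[LHS]mulmx1 -[X in invmx B *m X](addrK (q^-1 *: (cox_defect p *m ones K p))).
rewrite -BY mulmxBr mulmxA mulVmx ?unitmx_burau_cox // mul1mx -scalemxAr mulmxA.
by rewrite scalemxAl mulNmx.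
Qed.

Lemma ones_invmx_burau_cox : ones K p *m invmx B = ones K p.
Proof. by rewrite -{1}ones_burau_cox -mulmxA mulmxV ?unitmx_burau_cox // mulmx1. Qed.

Lemma burau_sigma_mod_ones (m : int) : gcdz n m = 1 ->
  ones K p *m burau_sigma n m = ones K p /\
  exists2 k, coprime k n & rotmx_mod_ones (q ^ m) k (burau_sigma n m).
Proof.
case: m => j [coprime_nj].
  have -> : burau_sigma n j = iter j (mulmx B) 1%:M by [].
  split; first exact: ones_iter_mulmx ones_burau_cox.
  exists (j * 1)%N; first by rewrite muln1 coprime_sym /coprime coprime_nj.
  by apply: rotmx_mod_ones_iter; exists (cox_defect p); apply: burau_coxE.
have -> : burau_sigma n (Negz j) = iter j.+1 (mulmx (invmx B)) 1%:M by [].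
split; first exact: ones_iter_mulmx ones_invmx_burau_cox.
exists (j.+1 * p)%N.
  by rewrite coprimeMl coprimenS andbT coprime_sym /coprime coprime_nj.
have -> : q ^ Negz j = q^-1 ^+ j.+1 by rewrite exprVn.
exact: rotmx_mod_ones_iter invmx_burau_cox_mod_ones.
Qed.

Lemma det_1_sub_burau_sigma (m : int) (s : K) : gcdz n m = 1 ->
  \det (1%:M - s *: burau_sigma n m) * (1 - s * q ^ m) = (1 - (s * q ^ m) ^+ n) * (1 - s).
Proof.
move=> /burau_sigma_mod_ones [ones_sigma [k coprime_k [w def_sigma]]].
rewrite -(det_1_sub_rotmx1 p (s * q ^ m)) -(det_1_sub_rotmx_coprime _ coprime_k).
apply: (det_ones_update (w := - s *: w)).
- by rewrite (ones_1_sub_scale (a := 1)) ?mulr1 ?scale1r.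
- by rewrite (ones_1_sub_scale (a := 1)) ?ones_rotmx ?scale1r ?mulr1.
- by rewrite def_sigma scalerDr scalerA opprD addrA -scalemxAl scaleNr.
Qed.

End BurauSigma.

Lemma one_sub_expr_ratio (F : fieldType) (x z s d : F) (N : nat) :
  1 - x != 0 -> 1 - x ^+ N != 0 -> 1 - z != 0 -> 1 - s != 0 ->
  d * (1 - z) = (1 - z ^+ N) * (1 - s) ->
  (1 - x) * (1 - z ^+ N) / ((1 - x ^+ N) * (1 - z)) =
  ((1 - x ^+ N) / (1 - x) * (1 - s))^-1 * d.
Proof.
move=> x_neq1 xN_neq1 z_neq1 s_neq1 eq_d.
have -> : d = (1 - z ^+ N) * (1 - s) / (1 - z) by rewrite -eq_d mulfK.
by field; rewrite x_neq1 xN_neq1 z_neq1 s_neq1.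
Qed.

Theorem corollary3p3 (n : nat) (m m' : int) :
  (2 <= n)%N -> m' != 0 ->
  gcdz n%:Z m = 1 -> gcdz n%:Z (m + m') = 1 ->
  alex_torus n (m + m') =
    (qint n * (1 - q ^ m'))^-1 * (zeta n m (q ^ m'))^-1.
Proof.
case: n => [|[|p]] // _ m'_neq0 gcd_m gcd_mm'.
have mm'_neq0 : m + m' != 0 by apply: contra_eq_neq gcd_mm' => ->; rewrite gcdz0.
rewrite /zeta invrK /alex_torus /qint [(_ * (m + m'))%R]mulrC -exprz_exp.
apply: one_sub_expr_ratio.
- exact: (one_sub_qz_neq0 (z := 1)).
- exact: (one_sub_qz_neq0 (z := p.+2)).
- exact: one_sub_qz_neq0.
- exact: one_sub_qz_neq0.
- by rewrite [m + m']addrC expfzDr ?q_neq0 //; apply: det_1_sub_burau_sigma.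
Qed.
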